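(* Let $n\ge2$, $\beta_i>0$, $\nu_i\in[0,1]$ and $\rho_i\in[0,1]$ for $i\in\{1,\dots,n\}$, and consider the well-mixed resource–consumption system \[ \dot x=(1-x)x-x\sum_{i=1}^n y_i,\qquad \dot y_i=\beta_i\Big((1-\nu_i)(x-\rho_i)+\frac{\nu_i}{n-1}\sum_{j\ne i}(y_j-y_i)\Big),\quad i=1,\dots,n . \] Assume that it is not the case that all $\nu_i=1$, not the case that all $\nu_i=0$, not the case that all $\rho_i=1$, and not the case that all $\rho_i=0$. Then, provided at most one of $\nu_1,\dots,\nu_n$ equals $0$ (i.e. at least $n-1$ consumers have $\nu_i>0$), the system has a unique equilibrium $(\bar x,\bar y_1,\dots,\bar y_n)$ satisfying $\bar x=1-\sum_{i=1}^n\bar y_i$; and such an equilibrium exists (uniquely) only if at least $n-1$ of the $\nu_i$ are positive.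
   Context: An equilibrium is a point $(\bar x,\bar y_1,\dots,\bar y_n)\in\mathbb{R}^{n+1}$ at which all right-hand sides vanish. *)

From HB Require Import structures.
From mathcomp Require Import all_boot all_order all_algebra.
From mathcomp Require Import reals.
Set Implicit Arguments. Unset Strict Implicit. Unset Printing Implicit Defensive.
Import Order.TTheory GRing.Theory Num.Theory.
Local Open Scope ring_scope.

Section RC.
Variables (R : realType) (n : nat) (beta nu rho : 'I_n -> R).

Definition rhs_x (x : R) (y : 'I_n -> R) : R :=
  (1 - x) * x - x * \sum_(i < n) y i.

Definition rhs_y (x : R) (y : 'I_n -> R) (i : 'I_n) : R :=
  beta i * ((1 - nu i) * (x - rho i)
            + nu i / (n.-1)%:R * \sum_(j < n | j != i) (y j - y i)).

Definition is_equilibrium (x : R) (y : 'I_n -> R) : Prop :=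
  rhs_x x y = 0 /\ forall i, rhs_y x y i = 0.

Definition interior_equilibrium (x : R) (y : 'I_n -> R) : Prop :=
  is_equilibrium x y /\ x = 1 - \sum_(i < n) y i.

Definition unique_interior_equilibrium : Prop :=
  (exists x y, interior_equilibrium x y) /\
  (forall x y x' y', interior_equilibrium x y -> interior_equilibrium x' y' ->
     x = x' /\ forall i, y i = y' i).
End RC.

From HB Require Import structures.
From mathcomp Require Import all_boot all_order all_algebra.
From mathcomp Require Import reals.
From mathcomp Require Import ring lra.
Import Order.TTheory GRing.Theory Num.Theory.
Local Open Scope ring_scope.
Set Implicit Arguments. Unset Strict Implicit.

(* On the hyperplane x = 1 - S, where S = \sum_j y_j, the x-equation vanishes,
   and since \sum_(j != i) (y_j - y_i) = S - n y_i the i-th consumer equation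
   only involves S and y_i.  A consumer with nu_i > 0 pins y_i to an affine
   function of S, while a consumer with nu_i = 0 pins S = 1 - rho_i and leaves
   y_i free.  With no such consumer, summing the affine expressions gives a
   linear equation for S whose slope is nonzero because some nu_k < 1; with
   exactly one, S is fixed and y_k is what remains of it; with two of them,
   moving one unit from one of their y's to the other yields a second
   equilibrium. *)

Section Equilibria.
Variables (R : realType) (n : nat) (beta nu rho : 'I_n -> R).

Definition reduced_rhs_y (i : 'I_n) (S v : R) : R :=
  (1 - nu i) * (1 - S - rho i) + nu i / n.-1%:R * (S - n%:R * v).

Definition reduced_equilibrium (y : 'I_n -> R) : Prop :=
  forall i, reduced_rhs_y i (\sum_(j < n) y j) (y i) = 0.

Definition weight (i : 'I_n) : R := n.-1%:R * (1 - nu i) / nu i.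

Definition target (i : 'I_n) (S : R) : R :=
  (S + weight i * (1 - S - rho i)) / n%:R.

Lemma rhs_x_interior (y : 'I_n -> R) : rhs_x (1 - \sum_(j < n) y j) y = 0.
Proof. by rewrite /rhs_x; ring. Qed.

Lemma rhs_y_interior y i :
  rhs_y beta nu rho (1 - \sum_(j < n) y j) y i =
  beta i * reduced_rhs_y i (\sum_(j < n) y j) (y i).
Proof.
rewrite /rhs_y /reduced_rhs_y; congr (_ * (_ + _ * _)).
have sum_diff : \sum_(j < n) (y j - y i) = \sum_(j < n) y j - n%:R * y i.
  by rewrite sumrB sumr_const card_ord mulr_natl.
by rewrite -sum_diff [RHS](bigD1 i) //= subrr add0r.
Qed.

Lemma reduced_rhs_y_nu0 i S v : nu i = 0 -> reduced_rhs_y i S v = 1 - S - rho i.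
Proof. by move=> nu0; rewrite /reduced_rhs_y nu0 subr0 mul1r !mul0r addr0. Qed.

Hypothesis n_gt1 : (1 < n)%N.

Let n_neq0 : n%:R != 0 :> R.
Proof. by rewrite pnatr_eq0 -lt0n ltnW. Qed.

Let n1_neq0 : n.-1%:R != 0 :> R.
Proof. by rewrite pnatr_eq0 -lt0n; case: n n_gt1. Qed.

Lemma reduced_rhs_yE i S v : nu i != 0 ->
  reduced_rhs_y i S v = nu i * n%:R / n.-1%:R * (target i S - v).
Proof.
move=> nu_neq0; rewrite /reduced_rhs_y /target /weight.
by field; rewrite nu_neq0 n_neq0 n1_neq0.
Qed.

Lemma reduced_rhs_y_eq0 i S v : nu i != 0 ->
  reduced_rhs_y i S v = 0 <-> v = target i S.
Proof.
move=> nu_neq0; rewrite reduced_rhs_yE //.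
have coef_neq0 : nu i * n%:R / n.-1%:R != 0 by rewrite !mulf_neq0 ?invr_eq0.
split=> [/eqP|->]; last by rewrite subrr mulr0.
by rewrite mulf_eq0 (negbTE coef_neq0) subr_eq0 => /eqP.
Qed.

Lemma sum_target S : \sum_(i < n) target i S =
  S + (\sum_(i < n) weight i * (1 - rho i) - S * \sum_(i < n) weight i) / n%:R.
Proof.
rewrite /target -mulr_suml big_split /= sumr_const card_ord mulr_sumr -sumrB.
have -> : \sum_(i < n) (weight i * (1 - rho i) - S * weight i) =
          \sum_(i < n) weight i * (1 - S - rho i).
  by apply: eq_bigr => i _; ring.
by rewrite -mulr_natr; field.
Qed.

Lemma sum_target_fixed S : \sum_(i < n) weight i != 0 ->
  \sum_(i < n) target i S = S <->
  S = (\sum_(i < n) weight i * (1 - rho i)) / \sum_(i < n) weight i.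
Proof.
move=> A_neq0; rewrite sum_target; split=> [/eqP|->].
  rewrite addrC -subr_eq0 addrK mulf_eq0 invr_eq0 (negbTE n_neq0) orbF subr_eq0.
  by move=> /eqP ->; rewrite mulfK.
by rewrite divfK // subrr mul0r addr0.
Qed.

Hypothesis nu_in01 : forall i, 0 <= nu i <= 1.

Lemma weight_ge0 i : 0 <= weight i.
Proof.
have /andP [nu_ge0 nu_le1] := nu_in01 i.
by rewrite /weight divr_ge0 // mulr_ge0 // subr_ge0.
Qed.

Lemma sum_weight_gt0 k : 0 < nu k < 1 -> 0 < \sum_(i < n) weight i.
Proof.
move=> /andP [nu_gt0 nu_lt1].
have weight_gt0 : 0 < weight k.
  by rewrite /weight divr_gt0 // mulr_gt0 ?subr_gt0 // lt0r n1_neq0 ler0n.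
by rewrite (bigD1 k) //= ltr_wpDr // sumr_ge0 // => i _; exact: weight_ge0.
Qed.

Hypothesis beta_gt0 : forall i, 0 < beta i.

Lemma interior_equilibriumP x y :
  interior_equilibrium beta nu rho x y <->
  x = 1 - \sum_(j < n) y j /\ reduced_equilibrium y.
Proof.
split=> [[[_ rhs_y0] x_eq]|[x_eq red]]; subst x.
  split=> // i; have /eqP := rhs_y0 i.
  by rewrite rhs_y_interior mulf_eq0 gt_eqF //= => /eqP.
by split=> //; split=> [|i]; rewrite ?rhs_x_interior // rhs_y_interior red mulr0.
Qed.

Lemma unique_interior_equilibrium_of_reduced y0 :
  reduced_equilibrium y0 -> (forall y, reduced_equilibrium y -> y =1 y0) ->
  unique_interior_equilibrium beta nu rho.
Proof.
move=> red0 uniq; split.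
  by exists (1 - \sum_(j < n) y0 j), y0; apply/interior_equilibriumP.
move=> x y x' y' /interior_equilibriumP [-> /uniq y_eq]
  /interior_equilibriumP [-> /uniq y'_eq].
by rewrite !(eq_bigr _ (fun i _ => y_eq i)) (eq_bigr _ (fun i _ => y'_eq i));
  split=> // i; rewrite y_eq y'_eq.
Qed.

Lemma sum_transfer (y : 'I_n -> R) a b :
  \sum_(j < n) (y j + (j == a)%:R - (j == b)%:R) = \sum_(j < n) y j.
Proof.
have sum_delta c : \sum_(j < n) ((j == c)%:R : R) = 1.
  by rewrite (bigD1 c) //= eqxx big1 ?addr0 // => j /negbTE ->.
by rewrite sumrB big_split /= !sum_delta addrK.
Qed.

Lemma reduced_equilibrium_transfer y a b : nu a = 0 -> nu b = 0 ->
  reduced_equilibrium y ->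
  reduced_equilibrium (fun j => y j + (j == a)%:R - (j == b)%:R).
Proof.
move=> nua0 nub0 red i /=; rewrite sum_transfer.
have [-> | ia] := eqVneq i a.
  by rewrite (reduced_rhs_y_nu0 _ _ nua0) -(reduced_rhs_y_nu0 _ (y a) nua0).
have [-> | ib] := eqVneq i b.
  by rewrite (reduced_rhs_y_nu0 _ _ nub0) -(reduced_rhs_y_nu0 _ (y b) nub0).
by rewrite addr0 subr0; apply: red.
Qed.

Lemma two_nu0_not_unique a b : a != b -> nu a = 0 -> nu b = 0 ->
  ~ unique_interior_equilibrium beta nu rho.
Proof.
move=> ab nua0 nub0 [[x [y /[dup] eq_xy /interior_equilibriumP [x_eq red]]] uniq].
have eq_xy' : interior_equilibrium beta nu rho x
    (fun j => y j + (j == a)%:R - (j == b)%:R).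
  by apply/interior_equilibriumP; rewrite sum_transfer;
    split=> //; exact: reduced_equilibrium_transfer.
have [_ /(_ a) /eqP] := uniq _ _ _ _ eq_xy eq_xy'.
rewrite eqxx (negbTE ab) subr0 -subr_eq0 opprD addrA subrr add0r.
by rewrite oppr_eq0 pnatr_eq0.
Qed.

Lemma unique_interior_equilibrium_nu_neq0 :
  (forall i, nu i != 0) -> (exists k, nu k != 1) ->
  unique_interior_equilibrium beta nu rho.
Proof.
move=> nu_neq0 [k nuk1].
have A_neq0 : \sum_(i < n) weight i != 0.
  rewrite gt_eqF // (sum_weight_gt0 (k := k)) // !lt_def nu_neq0 eq_sym nuk1.
  exact: nu_in01.
pose S0 := (\sum_(i < n) weight i * (1 - rho i)) / \sum_(i < n) weight i.
apply: (unique_interior_equilibrium_of_reduced (y0 := target^~ S0)).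
  have sum_target0 : \sum_(i < n) target i S0 = S0 by apply/sum_target_fixed.
  by move=> i; rewrite sum_target0; apply/(reduced_rhs_y_eq0 _ _ (nu_neq0 i)).
move=> y red.
have y_eq i : y i = target i (\sum_(j < n) y j).
  exact/(reduced_rhs_y_eq0 _ _ (nu_neq0 i))/red.
have /(sum_target_fixed _ A_neq0) sum_y :
    \sum_(i < n) target i (\sum_(j < n) y j) = \sum_(j < n) y j.
  by apply/esym/eq_bigr => i _; exact: y_eq.
by move=> i; rewrite y_eq sum_y.
Qed.

Lemma unique_interior_equilibrium_single_nu0 k : nu k = 0 ->
  (forall i, i != k -> nu i != 0) -> unique_interior_equilibrium beta nu rho.
Proof.
move=> nuk0 nu_neq0.
pose S0 := 1 - rho k.
pose y0 i := if i == k then S0 - \sum_(j < n | j != k) target j S0 else target i S0.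
have sum_y0 : \sum_(j < n) y0 j = S0.
  rewrite (bigD1 k) //= /y0 eqxx.
  by under eq_bigr => j /negbTE -> do []; rewrite subrK.
apply: (unique_interior_equilibrium_of_reduced (y0 := y0)).
  move=> i; rewrite sum_y0; have [-> | ik] := eqVneq i k.
    by rewrite reduced_rhs_y_nu0 // /S0; ring.
  by apply/(reduced_rhs_y_eq0 _ _ (nu_neq0 _ ik)); rewrite /y0 (negbTE ik).
move=> y red.
have sum_y : \sum_(j < n) y j = S0.
  by move: (red k); rewrite reduced_rhs_y_nu0 // /S0; lra.
have y_eq i : i != k -> y i = y0 i.
  move=> ik; rewrite /y0 (negbTE ik) -sum_y.
  exact/(reduced_rhs_y_eq0 _ _ (nu_neq0 _ ik))/red.
have rest : \sum_(j < n | j != k) y j = \sum_(j < n | j != k) y0 j.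
  by apply: eq_bigr => j; exact: y_eq.
move=> i; have [-> | ik] := eqVneq i k; last exact: y_eq.
by move: sum_y; rewrite -sum_y0 (bigD1 k) //= [RHS](bigD1 k) //= rest => /addIr.
Qed.

End Equilibria.

Theorem lemma10p4 (R : realType) (n : nat) (beta nu rho : 'I_n -> R) :
  (2 <= n)%N ->
  (forall i, 0 < beta i) ->
  (forall i, 0 <= nu i <= 1) ->
  (forall i, 0 <= rho i <= 1) ->
  ~ (forall i, nu i = 1) ->
  ~ (forall i, nu i = 0) ->
  ~ (forall i, rho i = 1) ->
  ~ (forall i, rho i = 0) ->
  ((#|[set i | nu i == 0%R]| <= 1)%N -> unique_interior_equilibrium beta nu rho) /\
  (unique_interior_equilibrium beta nu rho -> (#|[set i | nu i == 0%R]| <= 1)%N).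
Proof.
move=> n_gt1 beta_gt0 nu_in01 _ nu_not1 _ _ _; split=> [card_nu0 | uniq].
  have [k /eqP nuk0 | nu_neq0] := pickP (fun k => nu k == 0).
    apply: (unique_interior_equilibrium_single_nu0 _ n_gt1 beta_gt0 nuk0) => i ik.
    apply/eqP => nui0; move/card_le1_eqP: card_nu0 => /(_ i k).
    by rewrite !inE nui0 nuk0 eqxx => /(_ isT isT) ik_eq; rewrite ik_eq eqxx in ik.
  apply: unique_interior_equilibrium_nu_neq0 => // [i | ]; first by rewrite nu_neq0.
  have [k nuk1 | nu_eq1] := pickP (fun k => nu k != 1); first by exists k.
  by case: nu_not1 => i; apply/eqP/negbFE/nu_eq1.
rewrite leqNgt; apply/negP => /card_gt1P [a [b [+ + ab]]].
rewrite !inE => /eqP nua0 /eqP nub0.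
exact: (two_nu0_not_unique beta_gt0 ab nua0 nub0 uniq).
Qed.
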